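(* Let $1\le K<d$ be integers. For $\lambda\in(0,1)$ let $\bar F_\lambda$ be the solution of $\bar F'(w)=T_\lambda(\bar F(w))-\bar F(w)$, $\bar F(0)=\lambda$, with $T_\lambda$ as below, and let $\mathbb E[W_\lambda]=\frac1\lambda\int_0^\infty T_\lambda(\bar F_\lambda(w))\,dw$. Then $$\lim_{\lambda\to1^-}-\frac{\mathbb E[W_\lambda]}{\log(1-\lambda)}=\frac{K}{d-K}.$$
   Context: For integers $1\le K<d$ and $\lambda\in(0,1)$, $T_\lambda(u)=\frac{\lambda}{K}\sum_{j=0}^{K-1}(K-j)\binom{d}{j}u^{d-j}(1-u)^j$ for $u\in[0,\infty)$ (the LL($d,K$) policy: batches of $K$ exponential(1) jobs sent to the $K$ least loaded of $d$ sampled servers). *)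

From Stdlib Require Import Reals Lra.
From Coquelicot Require Import Coquelicot.
Open Scope R_scope.

Definition T_LL (d K : nat) (lam u : R) : R :=
  lam / INR K *
  sum_f_R0 (fun j => INR (K - j) * Binomial.C d j * u ^ (d - j) * (1 - u) ^ j) (K - 1).

Definition is_LL_solution (d K : nat) (lam : R) (F : R -> R) : Prop :=
  F 0 = lam /\
  filterlim F (at_right 0) (locally lam) /\
  (forall w, 0 < w -> is_derive F w (T_LL d K lam (F w) - F w)).

Definition mean_wait (d K : nat) (lam : R) (F : R -> R) : R :=
  / lam * real (Lim (fun b => RInt (fun w => T_LL d K lam (F w)) 0 b) p_infty).

(* Write T(u) = lam (u - Q(u)/K), where the "deficit" Q(u) = K u - sum_{j<K} (K-j) B_{d,j}(u)
   is a combination of the Bernstein polynomials B_{d,j} with coefficients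
   0 <= c_j <= (d-K) j / d.  Hence 0 <= Q(u) <= (d-K)(1-u), and the single terms j = 1 and
   j = d-1 bound Q from below near u = 1 and near u = 0.  These estimates sandwich T(u)
   between explicit multiples of u - T(u) (T_upper_comparison, T_lower_comparison).
   The solution F of F' = T(F) - F, F(0) = lam, stays in (0, lam] and satisfies
   lam e^{-w} <= F(w) <= lam e^{-(1-lam) w} (continuous induction and a Gronwall argument).
   Along F, (Phi (1 - F))' = phi (1 - F) (F - T(F)) whenever Phi' = phi, so the comparison
   inequalities bound the served work W(b) = int_0^b T(F) by increments of a potential:
   Phi(v) = K/(d-K) ln v + C v yields W(b) <= C + K/(d-K) (-ln (1-lam)) for all b, and a
   logarithmic potential adapted to the lower comparison yields, at b = ln 2 / (1-lam),
   W(b) >= lam (s(lam) (-ln (1-lam)) + c(lam)) with s(lam) -> K/(d-K) and c(lam) convergent.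
   Thus W increases to
   a finite limit L with E[W_lam] = L / lam, and dividing both bounds by -lam ln(1-lam)
   squeezes the ratio to K/(d-K) as lam -> 1-. *)

From Stdlib Require Import Reals Lra Lia Factorial Classical.
From Coquelicot Require Import Coquelicot.
Open Scope R_scope.

Lemma sum_nonneg_upto (f : nat -> R) (n : nat) :
  (forall j, (j <= n)%nat -> 0 <= f j) -> 0 <= sum_f_R0 f n.
Proof.
  induction n as [|n IH]; intros Hf.
  - apply Hf; lia.
  - rewrite tech5.
    assert (0 <= f (S n)) by (apply Hf; lia).
    assert (0 <= sum_f_R0 f n) by (apply IH; intros; apply Hf; lia).
    lra.
Qed.

Lemma sum_term_le (f : nat -> R) (n k : nat) : (k <= n)%nat ->
  (forall j, (j <= n)%nat -> 0 <= f j) -> f k <= sum_f_R0 f n.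
Proof.
  intros Hk Hf. induction Hk as [|n Hk IH].
  - destruct k as [|k]; [simpl; lra|]. rewrite tech5.
    assert (0 <= sum_f_R0 f k) by (apply sum_nonneg_upto; intros; apply Hf; lia).
    lra.
  - rewrite tech5.
    assert (0 <= f (S n)) by (apply Hf; lia).
    assert (f k <= sum_f_R0 f n) by (apply IH; intros; apply Hf; lia).
    lra.
Qed.

Lemma sum_zero_tail (f : nat -> R) (n m : nat) : (n <= m)%nat ->
  (forall j, (n < j <= m)%nat -> f j = 0) -> sum_f_R0 f m = sum_f_R0 f n.
Proof.
  intros Hnm Hz. induction Hnm as [|m Hnm IH]; [reflexivity|].
  rewrite tech5, IH by (intros; apply Hz; lia).
  rewrite (Hz (S m)) by lia. ring.
Qed.

Definition bern (d j : nat) (u : R) : R := Binomial.C d j * u ^ (d - j) * (1 - u) ^ j.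

Lemma bern_nonneg d j u : 0 <= u <= 1 -> 0 <= bern d j u.
Proof.
  intros Hu. unfold bern.
  assert (0 <= Binomial.C d j).
  { unfold Binomial.C. apply Rdiv_le_0_compat; [apply pos_INR|].
    apply Rmult_lt_0_compat; apply INR_fact_lt_0. }
  assert (0 <= u ^ (d - j)) by (apply pow_le; lra).
  assert (0 <= (1 - u) ^ j) by (apply pow_le; lra).
  apply Rmult_le_pos; [apply Rmult_le_pos|]; assumption.
Qed.

Lemma bern_sum d u : sum_f_R0 (fun j => bern d j u) d = 1.
Proof.
  rewrite <- (pow1 d). replace 1 with ((1 - u) + u) by ring.
  rewrite binomial. apply sum_eq. intros i _. unfold bern. ring.
Qed.

Lemma binom_absorb n i : (i <= n)%nat ->
  INR (S i) * Binomial.C (S n) (S i) = INR (S n) * Binomial.C n i.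
Proof.
  intros Hi. unfold Binomial.C. replace (S n - S i)%nat with (n - i)%nat by lia.
  change (fact (S n)) with (S n * fact n)%nat.
  change (fact (S i)) with (S i * fact i)%nat.
  rewrite !mult_INR.
  pose proof (INR_fact_neq_0 i). pose proof (INR_fact_neq_0 (n - i)).
  assert (INR (S i) <> 0) by (apply not_0_INR; lia).
  field. tauto.
Qed.

Lemma binom_1 n : Binomial.C (S n) 1 = INR (S n).
Proof.
  pose proof (binom_absorb n 0 ltac:(lia)) as H.
  assert (Hn0 : Binomial.C n 0 = 1).
  { unfold Binomial.C. rewrite Nat.sub_0_r. change (fact 0) with 1%nat.
    pose proof (INR_fact_neq_0 n). simpl INR. field. assumption. }
  rewrite Hn0 in H. simpl INR in H at 1. lra.
Qed.

Lemma bern_mean d u : sum_f_R0 (fun j => INR j * bern d j u) d = INR d * (1 - u).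
Proof.
  destruct d as [|d]; [simpl; ring|].
  rewrite decomp_sum by lia. simpl pred.
  rewrite (sum_eq _ (fun i => bern d i u * (INR (S d) * (1 - u)))).
  - rewrite <- scal_sum, bern_sum. simpl INR at 1. ring.
  - intros i Hi. unfold bern.
    rewrite <- !Rmult_assoc, binom_absorb by lia.
    replace (S d - S i)%nat with (d - i)%nat by lia. simpl pow. ring.
Qed.

Definition dispatch_sum (d K : nat) (u : R) : R :=
  sum_f_R0 (fun j => INR (K - j) * Binomial.C d j * u ^ (d - j) * (1 - u) ^ j) (K - 1).

Definition deficit (d K : nat) (u : R) : R := INR K * u - dispatch_sum d K u.

(* Coefficient of B_{d,j} in the Bernstein expansion of the deficit. *)
Definition deficit_coef (d K j : nat) : R := INR K - INR K * INR j / INR d - INR (K - j).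

Lemma dispatch_sum_nonneg d K u : 0 <= u <= 1 -> 0 <= dispatch_sum d K u.
Proof.
  intros Hu. apply sum_nonneg_upto. intros j _.
  pose proof (bern_nonneg d j u Hu). pose proof (pos_INR (K - j)).
  unfold bern in *. rewrite !Rmult_assoc in *. apply Rmult_le_pos; assumption.
Qed.

Section Deficit.
Variables d K : nat.
Hypothesis K_pos : (1 <= K)%nat.
Hypothesis K_lt_d : (K < d)%nat.

(* Bernstein expansion Q = sum_{j<=d} c_j B_{d,j}, using partition of unity and the mean. *)
Lemma deficit_bernstein u :
  deficit d K u = sum_f_R0 (fun j => deficit_coef d K j * bern d j u) d.
Proof.
  assert (Hd : INR d <> 0) by (apply not_0_INR; lia).
  assert (HP : dispatch_sum d K u = sum_f_R0 (fun j => INR (K - j) * bern d j u) d).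
  { unfold dispatch_sum.
    rewrite (sum_zero_tail (fun j => INR (K - j) * bern d j u) (K - 1) d) by
      (try lia; intros j Hj; replace (K - j)%nat with 0%nat by lia; simpl; ring).
    apply sum_eq. intros; unfold bern; ring. }
  unfold deficit, deficit_coef. rewrite HP.
  rewrite (sum_eq (fun j => (INR K - INR K * INR j / INR d - INR (K - j)) * bern d j u)
                  (fun j => (bern d j u * INR K - (INR j * bern d j u) * (INR K / INR d))
                              - INR (K - j) * bern d j u))
    by (intros; cbv beta; field; assumption).
  rewrite !minus_sum, <- !scal_sum, bern_mean, bern_sum. field. assumption.
Qed.

Lemma deficit_coef_formula j : (j <= d)%nat ->
  deficit_coef d K j =
  (if Compare_dec.le_dec j K then INR j * (INR d - INR K) else INR K * (INR d - INR j)) / INR d.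
Proof.
  intros Hj. assert (INR d <> 0) by (apply not_0_INR; lia). unfold deficit_coef.
  destruct (Compare_dec.le_dec j K).
  - rewrite minus_INR by assumption. field. assumption.
  - replace (K - j)%nat with 0%nat by lia. simpl INR. field. assumption.
Qed.

Lemma deficit_coef_bounds j : (j <= d)%nat ->
  0 <= deficit_coef d K j <= (INR d - INR K) * INR j / INR d.
Proof.
  intros Hj. rewrite deficit_coef_formula by assumption.
  assert (INR K < INR d) by (apply lt_INR; assumption).
  assert (INR j <= INR d) by (apply le_INR; assumption).
  pose proof (pos_INR j). pose proof (pos_INR K).
  assert (0 < INR d) by lra.
  unfold Rdiv. split.
  - apply Rmult_le_pos; [|left; apply Rinv_0_lt_compat; lra].
    destruct (Compare_dec.le_dec j K); apply Rmult_le_pos; lra.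
  - apply Rmult_le_compat_r; [left; apply Rinv_0_lt_compat; lra|].
    destruct (Compare_dec.le_dec j K) as [|Hjk]; [lra|].
    assert (INR K <= INR j) by (apply le_INR; lia). nra.
Qed.

(* 0 <= Q(u) <= (d-K)(1-u) on [0,1], comparing c_j with (d-K) j / d. *)
Lemma deficit_bounds u : 0 <= u <= 1 ->
  0 <= deficit d K u <= (INR d - INR K) * (1 - u).
Proof.
  intros Hu. assert (INR d <> 0) by (apply not_0_INR; lia).
  rewrite deficit_bernstein. split.
  - apply sum_nonneg_upto. intros j Hj.
    apply Rmult_le_pos; [apply deficit_coef_bounds | apply bern_nonneg]; assumption.
  - replace ((INR d - INR K) * (1 - u)) with
      (((INR d - INR K) / INR d) * sum_f_R0 (fun j => INR j * bern d j u) d)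
      by (rewrite bern_mean; field; assumption).
    rewrite scal_sum. apply sum_Rle. intros j Hj.
    pose proof (deficit_coef_bounds j Hj). pose proof (bern_nonneg d j u Hu).
    replace (INR j * bern d j u * ((INR d - INR K) / INR d))
      with ((INR d - INR K) * INR j / INR d * bern d j u) by (field; assumption).
    apply Rmult_le_compat_r; tauto.
Qed.

Lemma deficit_ge_term u j : 0 <= u <= 1 -> (j <= d)%nat ->
  deficit_coef d K j * bern d j u <= deficit d K u.
Proof.
  intros Hu Hj. rewrite deficit_bernstein.
  apply (sum_term_le (fun i => deficit_coef d K i * bern d i u)); [assumption|].
  intros i Hi. apply Rmult_le_pos; [apply deficit_coef_bounds | apply bern_nonneg]; assumption.
Qed.

(* The term j = 1 controls Q near u = 1. *)
Lemma deficit_ge_near_one u : 0 <= u <= 1 ->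
  (INR d - INR K) * u ^ (d - 1) * (1 - u) <= deficit d K u.
Proof.
  intros Hu. eapply Rle_trans; [|apply (deficit_ge_term u 1); [assumption | lia]].
  right. assert (INR d <> 0) by (apply not_0_INR; lia).
  rewrite deficit_coef_formula by lia. destruct (Compare_dec.le_dec 1 K); [|lia].
  destruct d as [|d']; [lia|]. unfold bern. rewrite binom_1.
  simpl pow. replace (S d' - 1)%nat with d' by lia. replace (INR 1) with 1 by reflexivity.
  field. assumption.
Qed.

(* The term j = d-1 controls Q near u = 0. *)
Lemma deficit_ge_near_zero u : 0 <= u <= 1 ->
  INR K * u * (1 - u) ^ (d - 1) <= deficit d K u.
Proof.
  intros Hu. eapply Rle_trans; [|apply (deficit_ge_term u (d - 1)); [assumption | lia]].
  right. assert (INR d <> 0) by (apply not_0_INR; lia).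
  unfold deficit_coef. replace (K - (d - 1))%nat with 0%nat by lia.
  destruct d as [|d']; [lia|]. unfold bern.
  rewrite pascal_step1 by lia. replace (S d' - (S d' - 1))%nat with 1%nat by lia.
  rewrite binom_1. replace (S d' - 1)%nat with d' by lia.
  pose proof (pos_INR d'). rewrite S_INR. simpl pow. simpl INR. field. lra.
Qed.

End Deficit.

Lemma bernoulli_ineq n u : 0 <= u <= 1 -> 1 - u ^ n <= INR n * (1 - u).
Proof.
  intros Hu. induction n as [|n IH]; [simpl; lra|].
  rewrite S_INR. simpl pow.
  assert (u ^ n <= 1) by (rewrite <- (pow1 n); apply pow_incr; lra).
  assert (0 <= u ^ n) by (apply pow_le; lra).
  nra.
Qed.

Lemma one_le_near_one n u : / 2 <= u <= 1 -> 1 <= u ^ n * (1 + INR n * 2 ^ n * (1 - u)).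
Proof.
  intros Hu.
  pose proof (bernoulli_ineq n u ltac:(lra)).
  assert (1 <= 2 ^ n * u ^ n) by (rewrite <- Rpow_mult_distr; apply pow_R1_Rle; lra).
  assert (0 <= INR n * (1 - u)) by (apply Rmult_le_pos; [apply pos_INR | lra]).
  replace (u ^ n * (1 + INR n * 2 ^ n * (1 - u)))
    with (u ^ n + INR n * (1 - u) * (2 ^ n * u ^ n)) by ring.
  nra.
Qed.

Lemma INR_K_pos (K : nat) : (1 <= K)%nat -> 0 < INR K.
Proof. intros HK. apply lt_0_INR. lia. Qed.

(* The constant C in the upper potential K/(d-K) ln v + C v. *)
Definition growth_const (d K : nat) : R :=
  INR K * INR (d - 2) * 2 ^ (d - 2) / (INR d - INR K) + 2 ^ (d - 1).

Section Dispatch.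
Variables (d K : nat) (lam : R).
Hypothesis K_pos : (1 <= K)%nat.
Hypothesis K_lt_d : (K < d)%nat.
Hypothesis lam_unit : 0 < lam < 1.
Let m := INR d - INR K.
Let T := T_LL d K lam.

Lemma slack_pos : 0 < m.
Proof. unfold m. pose proof (lt_INR K d K_lt_d). lra. Qed.

Lemma T_deficit u : T u = lam * (u - deficit d K u / INR K).
Proof.
  unfold T, T_LL, deficit. fold (dispatch_sum d K u).
  pose proof (INR_K_pos K K_pos). field. lra.
Qed.

Lemma T_bounds u : 0 <= u <= 1 ->
  lam * (1 - INR d / INR K * (1 - u)) <= T u /\ 0 <= T u <= lam * u.
Proof.
  intros Hu. pose proof (INR_K_pos K K_pos) as HK.
  pose proof (deficit_bounds d K K_pos K_lt_d u Hu) as [HQ0 HQ1].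
  pose proof (dispatch_sum_nonneg d K u Hu) as HP.
  rewrite T_deficit. unfold deficit in *.
  assert (HPK : 0 <= dispatch_sum d K u / INR K) by (apply Rdiv_le_0_compat; lra).
  replace (lam * (u - (INR K * u - dispatch_sum d K u) / INR K))
    with (lam * (dispatch_sum d K u / INR K)) by (field; lra).
  repeat split.
  - apply Rmult_le_compat_l; [lra|].
    apply (Rmult_le_reg_r (INR K)); [assumption|].
    replace (dispatch_sum d K u / INR K * INR K) with (dispatch_sum d K u) by (field; lra).
    replace ((1 - INR d / INR K * (1 - u)) * INR K) with (INR K - INR d * (1 - u)) by (field; lra).
    nra.
  - apply Rmult_le_pos; lra.
  - apply Rmult_le_compat_l; [lra|].
    apply (Rmult_le_reg_r (INR K)); [assumption|].
    replace (dispatch_sum d K u / INR K * INR K) with (dispatch_sum d K u) by (field; lra).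
    lra.
Qed.

Lemma growth_head_nonneg : 0 <= INR K * INR (d - 2) * 2 ^ (d - 2) / m.
Proof.
  pose proof slack_pos. pose proof (INR_K_pos K K_pos). pose proof (pos_INR (d - 2)).
  pose proof (pow_le 2 (d - 2) ltac:(lra)).
  apply Rdiv_le_0_compat; [apply Rmult_le_pos; [apply Rmult_le_pos|]|]; lra.
Qed.

Lemma growth_const_nonneg : 0 <= growth_const d K.
Proof.
  pose proof growth_head_nonneg. pose proof (pow_le 2 (d - 1) ltac:(lra)).
  unfold growth_const. fold m. lra.
Qed.

(* Near u = 1 the term j = 1 of Q beats the singular weight K/((d-K)(1-u)). *)
Lemma deficit_controls_near_one u : / 2 <= u < 1 ->
  INR K * u <= (INR K / (m * (1 - u)) + INR K * INR (d - 2) * 2 ^ (d - 2) / m) * deficit d K u.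
Proof.
  intros Hu. pose proof slack_pos as Hm. pose proof (INR_K_pos K K_pos) as HK.
  pose proof growth_head_nonneg as Hhead. set (n := (d - 2)%nat) in *.
  pose proof (deficit_ge_near_one d K K_pos K_lt_d u ltac:(lra)) as HQ. fold m in HQ.
  replace (d - 1)%nat with (S n) in HQ by (unfold n; lia). simpl pow in HQ.
  pose proof (one_le_near_one n u ltac:(lra)) as Hn.
  assert (0 <= u ^ n) by (apply pow_le; lra).
  assert (Hw : 0 <= INR K / (m * (1 - u)) + INR K * INR n * 2 ^ n / m).
  { assert (0 <= INR K / (m * (1 - u))) by (apply Rdiv_le_0_compat; nra). lra. }
  eapply Rle_trans; [|apply Rmult_le_compat_l; [exact Hw | exact HQ]].
  replace ((INR K / (m * (1 - u)) + INR K * INR n * 2 ^ n / m) * (m * (u * u ^ n) * (1 - u)))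
    with (INR K * u * (u ^ n * (1 + INR n * 2 ^ n * (1 - u)))) by (field; lra).
  rewrite <- (Rmult_1_r (INR K * u)) at 1. apply Rmult_le_compat_l; nra.
Qed.

(* Near u = 0 the term j = d-1 of Q is comparable to K u. *)
Lemma deficit_controls_near_zero u : 0 < u < / 2 -> INR K * u <= 2 ^ (d - 1) * deficit d K u.
Proof.
  intros Hu. pose proof (INR_K_pos K K_pos) as HK.
  pose proof (deficit_ge_near_zero d K K_pos K_lt_d u ltac:(lra)) as HQ.
  assert (H2 : 1 <= 2 ^ (d - 1) * (1 - u) ^ (d - 1))
    by (rewrite <- Rpow_mult_distr; apply pow_R1_Rle; lra).
  assert (INR K * u <= INR K * u * (2 ^ (d - 1) * (1 - u) ^ (d - 1)))
    by (rewrite <- (Rmult_1_r (INR K * u)) at 1; apply Rmult_le_compat_l; nra).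
  assert (2 ^ (d - 1) * (INR K * u * (1 - u) ^ (d - 1)) <= 2 ^ (d - 1) * deficit d K u)
    by (apply Rmult_le_compat_l; [apply pow_le; lra | assumption]).
  nra.
Qed.

Lemma deficit_controls u : 0 < u < 1 ->
  INR K * u <= (INR K / (m * (1 - u)) + growth_const d K) * deficit d K u.
Proof.
  intros Hu. pose proof slack_pos as Hm.
  pose proof growth_head_nonneg as Hhead. pose proof (pow_le 2 (d - 1) ltac:(lra)) as Htail.
  destruct (deficit_bounds d K K_pos K_lt_d u ltac:(lra)) as [HQ0 _].
  assert (Hphi : 0 <= INR K / (m * (1 - u))) by (apply Rdiv_le_0_compat; [apply pos_INR | nra]).
  unfold growth_const. fold m.
  destruct (Rle_lt_dec (/ 2) u) as [Hhalf|Hhalf].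
  - pose proof (deficit_controls_near_one u ltac:(lra)). nra.
  - pose proof (deficit_controls_near_zero u ltac:(lra)). nra.
Qed.

(* T(u) <= phi(1-u) (u - T(u)), since u - T(u) >= lam Q(u)/K. *)
Lemma T_upper_comparison u : 0 < u < 1 ->
  T u <= (INR K / (m * (1 - u)) + growth_const d K) * (u - T u).
Proof.
  intros Hu. pose proof (INR_K_pos K K_pos) as HK.
  pose proof (deficit_controls u Hu) as Hc.
  set (phi := INR K / (m * (1 - u)) + growth_const d K) in *.
  destruct (deficit_bounds d K K_pos K_lt_d u ltac:(lra)) as [HQ0 _].
  assert (Hphi : 0 <= phi).
  { pose proof slack_pos. pose proof growth_const_nonneg.
    assert (0 <= INR K / (m * (1 - u))) by (apply Rdiv_le_0_compat; nra).
    unfold phi. lra. }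
  destruct (T_bounds u ltac:(lra)) as [_ [_ HTu]].
  assert (Hgap : lam * (deficit d K u / INR K) <= u - T u).
  { rewrite T_deficit. nra. }
  assert (lam * u <= phi * (lam * (deficit d K u / INR K))).
  { replace (phi * (lam * (deficit d K u / INR K))) with (lam * (phi * deficit d K u) / INR K)
      by (field; lra).
    apply (Rmult_le_reg_r (INR K)); [assumption|].
    replace (lam * (phi * deficit d K u) / INR K * INR K) with (lam * (phi * deficit d K u))
      by (field; lra).
    nra. }
  assert (phi * (lam * (deficit d K u / INR K)) <= phi * (u - T u))
    by (apply Rmult_le_compat_l; assumption).
  lra.
Qed.

(* Under heavy load (K < lam d): psi(1-u) (u - T(u)) <= T(u), where
   psi(v) = lam (1 - d/K v) / ((1-lam) + (lam d/K - 1) v) is the ratio L/(u-L) for the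
   lower bound L = lam (1 - d/K (1-u)) of T. *)
Lemma T_lower_comparison u : 0 < u < 1 -> INR K < lam * INR d ->
  lam * (1 - INR d / INR K * (1 - u)) / ((1 - lam) + (lam * INR d / INR K - 1) * (1 - u))
    * (u - T u) <= T u.
Proof.
  intros Hu Hload. pose proof (INR_K_pos K K_pos) as HK.
  destruct (T_bounds u ltac:(lra)) as [HL [HT0 HTu]].
  set (L := lam * (1 - INR d / INR K * (1 - u))) in *.
  assert (Hden : (1 - lam) + (lam * INR d / INR K - 1) * (1 - u) = u - L)
    by (unfold L; field; lra).
  assert (Ha : 0 < lam * INR d / INR K - 1).
  { apply (Rmult_lt_reg_r (INR K)); [assumption|]. field_simplify; lra. }
  rewrite Hden.
  assert (0 < u - L) by (rewrite <- Hden; nra).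
  apply (Rmult_le_reg_r (u - L)); [assumption|].
  replace (L / (u - L) * (u - T u) * (u - L)) with (L * (u - T u)) by (field; lra).
  nra.
Qed.

End Dispatch.

Lemma nondecreasing_of_deriv (f df : R -> R) (a b : R) : a <= b ->
  (forall x, a < x < b -> is_derive f x (df x)) ->
  (forall x, a <= x <= b -> continuous f x) ->
  (forall x, a < x < b -> 0 <= df x) -> f a <= f b.
Proof.
  intros Hab Hd Hc Hs. destruct Hab as [Hab|<-]; [|lra].
  set (pr1 := fun c (P : a < c < b) => exist (fun l => derivable_pt_lim f c l) (df c)
                (proj1 (is_derive_Reals f c (df c)) (Hd c P))).
  set (pr2 := fun c (_ : a < c < b) => derivable_pt_id c).
  destruct (MVT f id a b pr1 pr2 Hab) as [c [P HP]].
  - intros x Hx. apply continuity_pt_filterlim, Hc, Hx.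
  - intros x _. apply derivable_continuous_pt, derivable_pt_id.
  - rewrite derive_pt_id in HP. simpl in HP. unfold id in HP.
    pose proof (Hs c P). nra.
Qed.

Lemma increment_le (G H g h : R -> R) (a b : R) : a <= b ->
  (forall x, a < x < b -> is_derive G x (g x)) ->
  (forall x, a < x < b -> is_derive H x (h x)) ->
  (forall x, a <= x <= b -> continuous G x) ->
  (forall x, a <= x <= b -> continuous H x) ->
  (forall x, a < x < b -> g x <= h x) ->
  G b - G a <= H b - H a.
Proof.
  intros Hab HG HH CG CH Hgh.
  enough (H a - G a <= H b - G b) by lra.
  apply (nondecreasing_of_deriv (fun x => H x - G x) (fun x => h x - g x) a b Hab).
  - intros x Hx. apply (is_derive_minus (K := R_AbsRing) (V := R_NormedModule)); auto.
  - intros x Hx. apply (continuous_minus (K := R_AbsRing) (V := R_NormedModule)); auto.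
  - intros x Hx. specialize (Hgh x Hx). lra.
Qed.

Lemma exp_weighted_growth (f df : R -> R) (c s : R) : 0 <= s ->
  (forall t, 0 < t < s -> is_derive f t (df t)) ->
  (forall t, 0 <= t <= s -> continuous f t) ->
  (forall t, 0 < t < s -> 0 <= df t + c * f t) ->
  f 0 <= f s * exp (c * s).
Proof.
  intros Hs Hd Hc Hsign.
  assert (He : forall t, is_derive (fun t => exp (c * t)) t (c * exp (c * t)))
    by (intros t; auto_derive; [trivial | ring]).
  replace (f 0) with (f 0 * exp (c * 0)) by (rewrite Rmult_0_r, exp_0; ring).
  apply (nondecreasing_of_deriv (fun t => f t * exp (c * t))
           (fun t => (df t + c * f t) * exp (c * t)) 0 s Hs).
  - intros t Ht.
    replace ((df t + c * f t) * exp (c * t)) with (df t * exp (c * t) + f t * (c * exp (c * t)))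
      by ring.
    apply (is_derive_mult (K := R_AbsRing) f (fun t => exp (c * t))); auto.
    exact Rmult_comm.
  - intros t Ht. apply (continuous_mult (K := R_AbsRing) f (fun t => exp (c * t))); auto.
    apply (ex_derive_continuous (K := R_AbsRing) (V := R_NormedModule)). eexists; apply He.
  - intros t Ht. pose proof (exp_pos (c * t)). pose proof (Hsign t Ht). nra.
Qed.

Lemma unit_interval_persists (f : R -> R) (s : R) : continuous f s -> 0 < f s < 1 ->
  exists del : posreal, forall t, Rabs (t - s) < del -> 0 < f t < 1.
Proof.
  intros Hc Hfs.
  set (eps := Rmin (f s) (1 - f s)).
  assert (Heps : 0 < eps) by (apply Rmin_glb_lt; lra).
  destruct (proj1 (filterlim_locally _ _) Hc (mkposreal eps Heps)) as [del Hdel].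
  exists del. intros t Ht.
  specialize (Hdel t Ht). apply Rabs_lt_between' in Hdel. simpl in Hdel.
  assert (eps <= f s) by apply Rmin_l. assert (eps <= 1 - f s) by apply Rmin_r.
  lra.
Qed.

(* The supremum of the times up to
   which f stays in [0,1] cannot lie before w, by persistence at that supremum. *)
Lemma continuous_trapping (f : R -> R) (w : R) : 0 <= w ->
  (forall t, 0 <= t <= w -> continuous f t) ->
  (forall s, 0 <= s <= w -> (forall t, 0 < t < s -> 0 <= f t <= 1) -> 0 < f s < 1) ->
  forall t, 0 <= t <= w -> 0 < f t < 1.
Proof.
  intros Hw Hc Hstep.
  set (E := fun s => 0 <= s <= w /\ forall t, 0 < t < s -> 0 <= f t <= 1).
  assert (HE0 : E 0) by (split; [lra | intros; lra]).
  assert (Hbnd : bound E) by (exists w; intros s Hs; apply Hs).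
  destruct (completeness E Hbnd (ex_intro _ 0 HE0)) as [sup [Hub Hlub]].
  assert (Hsup0 : 0 <= sup) by (apply Hub; exact HE0).
  assert (Hsupw : sup <= w) by (apply Hlub; intros s Hs; apply Hs).
  assert (Hbelow : forall t, 0 < t < sup -> 0 <= f t <= 1).
  { intros t Ht. apply NNPP. intros Hn.
    assert (sup <= t); [|lra].
    apply Hlub. intros s [Hs Hin]. destruct (Rle_dec s t) as [|Hst]; [assumption|].
    exfalso. apply Hn, Hin. lra. }
  assert (Hsup_w : sup = w).
  { destruct (Req_dec sup w) as [|Hne]; [assumption|]. exfalso.
    destruct (unit_interval_persists f sup (Hc sup ltac:(lra)) (Hstep sup ltac:(lra) Hbelow))
      as [del Hdel].
    set (s := Rmin (sup + del / 2) w).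
    assert (Hs : sup < s) by (apply Rmin_glb_lt; pose proof (cond_pos del); lra).
    assert (Hs' : s <= sup + del / 2) by apply Rmin_l.
    assert (HEs : E s).
    { split; [split; [lra | apply Rmin_r]|].
      intros t Ht. destruct (Rlt_dec t sup) as [|Hts]; [apply Hbelow; lra|].
      enough (0 < f t < 1) by lra.
      apply Hdel, Rabs_lt_between'. pose proof (cond_pos del). lra. }
    pose proof (Hub s HEs). lra. }
  intros t Ht. apply Hstep; [assumption|].
  intros r Hr. apply Hbelow. lra.
Qed.

Lemma is_lim_nondecreasing_bounded (I : R -> R) (M : R) :
  (forall a b, 0 <= a <= b -> I a <= I b) -> (forall b, 0 <= b -> I b <= M) ->
  exists L : R, is_lim I p_infty L /\ (forall b, 0 <= b -> I b <= L) /\ L <= M.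
Proof.
  intros Hmono Hbnd.
  set (E := fun y => exists b, 0 <= b /\ y = I b).
  assert (HE0 : E (I 0)) by (exists 0; split; [lra | reflexivity]).
  assert (HEb : bound E) by (exists M; intros y [b [Hb ->]]; apply Hbnd, Hb).
  destruct (completeness E HEb (ex_intro _ _ HE0)) as [L [Hub Hlub]].
  assert (HI : forall b, 0 <= b -> I b <= L) by (intros b Hb; apply Hub; exists b; auto).
  exists L. split; [|split; [exact HI | apply Hlub; intros y [b [Hb ->]]; apply Hbnd, Hb]].
  apply (proj2 (filterlim_locally _ _)). intros eps.
  destruct (classic (exists b, 0 <= b /\ L - eps < I b)) as [[b0 [Hb0 Hlt]]|Hn].
  - exists b0. intros x Hx. apply Rabs_lt_between'.
    pose proof (Hmono b0 x ltac:(lra)). pose proof (HI x ltac:(lra)).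
    pose proof (cond_pos eps). lra.
  - exfalso. assert (L <= L - eps); [|pose proof (cond_pos eps); lra].
    apply Hlub. intros y [b [Hb ->]]. apply Rnot_lt_le. intros Hlt. apply Hn. exists b; auto.
Qed.

Lemma T_continuous d K lam u : continuous (T_LL d K lam) u.
Proof.
  unfold T_LL. apply (continuous_mult (fun _ => lam / INR K)); [apply continuous_const|].
  apply continuity_pt_filterlim.
  apply (continuity_pt_finite_SF
           (fun j u => INR (K - j) * Binomial.C d j * u ^ (d - j) * (1 - u) ^ j)).
  intros j _. apply derivable_continuous_pt, ex_derive_Reals_0. auto_derive. trivial.
Qed.

Lemma exp_le_1 x : x <= 0 -> exp x <= 1.
Proof.
  intros [Hx | ->]; [|rewrite exp_0; lra].
  rewrite <- exp_0. left. apply exp_increasing, Hx.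
Qed.

(* The solution extended by the constant lam to w <= 0, giving a function that is continuous
   everywhere; it agrees with F on (0,oo). *)
Definition extend_left (lam : R) (F : R -> R) (w : R) : R :=
  if Rlt_dec 0 w then F w else lam.

Section Solution.
Variables (d K : nat) (lam : R) (F : R -> R).
Hypothesis K_pos : (1 <= K)%nat.
Hypothesis K_lt_d : (K < d)%nat.
Hypothesis lam_unit : 0 < lam < 1.
Hypothesis F_sol : is_LL_solution d K lam F.
Let f := extend_left lam F.
Let T := T_LL d K lam.

Lemma extend_left_0 : f 0 = lam.
Proof. unfold f, extend_left. destruct (Rlt_dec 0 0); [lra | reflexivity]. Qed.

Lemma extend_left_pos w : 0 < w -> f w = F w.
Proof. intros Hw. unfold f, extend_left. destruct (Rlt_dec 0 w); [reflexivity | lra]. Qed.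

Lemma extend_left_locally w : 0 < w -> locally w (fun t => F t = f t).
Proof.
  intros Hw. exists (mkposreal w Hw). intros t Ht. apply Rabs_lt_between' in Ht. simpl in Ht.
  symmetry. apply extend_left_pos. lra.
Qed.

Lemma extend_left_deriv w : 0 < w -> is_derive f w (T (f w) - f w).
Proof.
  intros Hw. destruct F_sol as [_ [_ HD]]. rewrite extend_left_pos by assumption.
  apply (is_derive_ext_loc F); [apply extend_left_locally | apply HD]; assumption.
Qed.

(* Continuity at 0 is exactly the right-continuity required of a solution. *)
Lemma extend_left_continuous w : continuous f w.
Proof.
  destruct F_sol as [_ [Hright HD]].
  destruct (Rlt_dec 0 w) as [Hw|Hw].
  - apply (continuous_ext_loc _ F); [apply extend_left_locally, Hw|].
    apply (ex_derive_continuous (K := R_AbsRing) (V := R_NormedModule)).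
    eexists. apply HD, Hw.
  - destruct (Rle_lt_or_eq_dec w 0 (Rnot_lt_le _ _ Hw)) as [Hneg | ->].
    + apply (continuous_ext_loc _ (fun _ => lam)); [|apply continuous_const].
      exists (mkposreal (- w) ltac:(lra)). intros t Ht. apply Rabs_lt_between' in Ht. simpl in Ht.
      unfold f, extend_left. destruct (Rlt_dec 0 t); [lra | reflexivity].
    + unfold continuous. rewrite extend_left_0.
      apply filterlim_locally. intros eps.
      destruct (proj1 (filterlim_locally F lam) Hright eps) as [del Hdel].
      exists del. intros y Hy. unfold f, extend_left. destruct (Rlt_dec 0 y).
      * apply Hdel; assumption.
      * apply ball_center.
Qed.

(* As long as the solution stays in [0,1], 0 <= T(u) <= lam u gives the exponential bounds. *)
Lemma exp_bounds_while_trapped s : 0 <= s ->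
  (forall t, 0 < t < s -> 0 <= f t <= 1) ->
  lam * exp (- s) <= f s <= lam * exp (- (1 - lam) * s).
Proof.
  intros Hs Htrap. split.
  - pose proof (exp_weighted_growth f (fun t => T (f t) - f t) 1 s Hs) as Hg.
    rewrite extend_left_0 in Hg.
    assert (Hl : lam <= f s * exp (1 * s)).
    { apply Hg.
      - intros t Ht. apply extend_left_deriv. lra.
      - intros t _. apply extend_left_continuous.
      - intros t Ht. destruct (T_bounds d K lam K_pos K_lt_d lam_unit (f t) (Htrap t Ht))
          as [_ [HT _]]. fold T in HT. cbv beta. lra. }
    apply (Rmult_le_reg_r (exp s)); [apply exp_pos|].
    rewrite Rmult_assoc, <- exp_plus, Rplus_opp_l, exp_0. rewrite Rmult_1_l in Hl. lra.
  - pose proof (exp_weighted_growth (fun t => - f t) (fun t => - (T (f t) - f t)) (1 - lam) s Hs)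
      as Hg.
    simpl in Hg. rewrite extend_left_0 in Hg.
    assert (Hl : - lam <= - f s * exp ((1 - lam) * s)).
    { apply Hg.
      - intros t Ht. apply (is_derive_opp (K := R_AbsRing) (V := R_NormedModule)).
        apply extend_left_deriv. lra.
      - intros t _. apply (continuous_opp (K := R_AbsRing) (V := R_NormedModule)).
        apply extend_left_continuous.
      - intros t Ht. destruct (T_bounds d K lam K_pos K_lt_d lam_unit (f t) (Htrap t Ht))
          as [_ [_ HT]]. fold T in HT. cbv beta. nra. }
    apply (Rmult_le_reg_r (exp ((1 - lam) * s))); [apply exp_pos|].
    rewrite Rmult_assoc, <- exp_plus.
    replace (- (1 - lam) * s + (1 - lam) * s) with 0 by ring. rewrite exp_0. lra.
Qed.

Lemma solution_in_unit t : 0 <= t -> 0 < f t < 1.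
Proof.
  intros Ht. apply (continuous_trapping f t Ht); [intros; apply extend_left_continuous| |lra].
  intros s Hs Htrap.
  destruct (exp_bounds_while_trapped s ltac:(lra) Htrap) as [Hlo Hhi].
  pose proof (exp_pos (- s)).
  assert (exp (- (1 - lam) * s) <= 1) by (apply exp_le_1; nra).
  split; nra.
Qed.

Lemma solution_bounds s : 0 <= s ->
  lam * exp (- s) <= f s <= lam * exp (- (1 - lam) * s).
Proof.
  intros Hs. apply exp_bounds_while_trapped; [assumption|].
  intros t Ht. pose proof (solution_in_unit t ltac:(lra)). lra.
Qed.

Lemma solution_range s : 0 <= s -> 0 < f s <= lam.
Proof.
  intros Hs. pose proof (solution_in_unit s Hs). destruct (solution_bounds s Hs) as [_ Hhi].
  assert (exp (- (1 - lam) * s) <= 1) by (apply exp_le_1; nra).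
  split; nra.
Qed.

End Solution.

(* The served work W(b) = int_0^b T(F(t)) dt, whose limit at +oo is lam E[W_lam]. *)
Definition served_work (d K : nat) (lam : R) (F : R -> R) (b : R) : R :=
  RInt (fun t => T_LL d K lam (extend_left lam F t)) 0 b.

Section Work.
Variables (d K : nat) (lam : R) (F : R -> R).
Hypothesis K_pos : (1 <= K)%nat.
Hypothesis K_lt_d : (K < d)%nat.
Hypothesis lam_unit : 0 < lam < 1.
Hypothesis F_sol : is_LL_solution d K lam F.
Let f := extend_left lam F.
Let T := T_LL d K lam.
Let W := served_work d K lam F.

Lemma served_rate_continuous x : continuous (fun t => T (f t)) x.
Proof.
  apply (continuous_comp f T); [apply (extend_left_continuous d K) | apply T_continuous].
  exact F_sol.
Qed.

Lemma work_deriv x : is_derive W x (T (f x)).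
Proof.
  apply (is_derive_RInt (fun t => T (f t)) W 0 x); [|apply served_rate_continuous].
  exists (mkposreal 1 Rlt_0_1). intros y _. apply (RInt_correct (V := R_CompleteNormedModule)).
  apply (ex_RInt_continuous (V := R_CompleteNormedModule)). intros; apply served_rate_continuous.
Qed.

Lemma work_continuous x : continuous W x.
Proof.
  apply (ex_derive_continuous (K := R_AbsRing) (V := R_NormedModule)).
  eexists; apply work_deriv.
Qed.

Lemma work_nondecreasing a b : 0 <= a <= b -> W a <= W b.
Proof.
  intros Hab. apply (nondecreasing_of_deriv W (fun t => T (f t))); try lra.
  - intros; apply work_deriv.
  - intros; apply work_continuous.
  - intros x Hx.
    pose proof (solution_range d K lam F K_pos K_lt_d lam_unit F_sol x ltac:(lra)) as Hr.
    fold f in Hr. destruct (T_bounds d K lam K_pos K_lt_d lam_unit (f x) ltac:(lra)) as [_ [HT _]].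
    exact HT.
Qed.

Section Potential.
Variables Phi phi : R -> R.
Hypothesis Phi_deriv : forall v, 0 < v < 1 -> is_derive Phi v (phi v).

Lemma potential_deriv w : 0 < w ->
  is_derive (fun t => Phi (1 - f t)) w (phi (1 - f w) * (f w - T (f w))).
Proof.
  intros Hw. pose proof (solution_in_unit d K lam F K_pos K_lt_d lam_unit F_sol w ltac:(lra)) as Hu.
  fold f in Hu.
  assert (Hd : is_derive (fun t => 1 - f t) w (0 - (T (f w) - f w))).
  { apply (is_derive_minus (K := R_AbsRing) (V := R_NormedModule) (fun _ => 1) f).
    - apply (is_derive_const (K := R_AbsRing) (V := R_NormedModule)).
    - apply (extend_left_deriv d K lam F F_sol w Hw). }
  replace (phi (1 - f w) * (f w - T (f w))) with (scal (0 - (T (f w) - f w)) (phi (1 - f w)))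
    by (unfold scal; simpl; unfold mult; simpl; ring).
  apply (is_derive_comp (K := R_AbsRing) (V := R_NormedModule) Phi (fun t => 1 - f t));
    [apply Phi_deriv; lra | exact Hd].
Qed.

Lemma potential_continuous w : 0 <= w -> continuous (fun t => Phi (1 - f t)) w.
Proof.
  intros Hw. pose proof (solution_in_unit d K lam F K_pos K_lt_d lam_unit F_sol w Hw) as Hu.
  fold f in Hu.
  apply (continuous_comp (fun t => 1 - f t) Phi).
  - apply (continuous_minus (K := R_AbsRing) (V := R_NormedModule) (fun _ => 1) f).
    + apply continuous_const.
    + apply (extend_left_continuous d K lam F F_sol).
  - apply (ex_derive_continuous (K := R_AbsRing) (V := R_NormedModule)).
    eexists. apply Phi_deriv. lra.
Qed.

Lemma work_le_potential b : 0 <= b ->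
  (forall u, 0 < u < 1 -> T u <= phi (1 - u) * (u - T u)) ->
  W b <= Phi (1 - f b) - Phi (1 - lam).
Proof.
  intros Hb Hcmp.
  pose proof (increment_le W (fun t => Phi (1 - f t)) (fun t => T (f t))
                (fun t => phi (1 - f t) * (f t - T (f t))) 0 b Hb) as Hinc.
  replace (W 0) with 0 in Hinc by (unfold W, served_work; rewrite RInt_point; reflexivity).
  replace (f 0) with lam in Hinc by (symmetry; apply extend_left_0).
  enough (W b - 0 <= Phi (1 - f b) - Phi (1 - lam)) by lra.
  apply Hinc.
  - intros; apply work_deriv.
  - intros; apply potential_deriv; lra.
  - intros; apply work_continuous.
  - intros; apply potential_continuous; lra.
  - intros x Hx. apply Hcmp. apply (solution_in_unit d K lam F K_pos K_lt_d lam_unit F_sol). lra.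
Qed.

Lemma potential_le_work b : 0 <= b ->
  (forall u, 0 < u < 1 -> phi (1 - u) * (u - T u) <= T u) ->
  Phi (1 - f b) - Phi (1 - lam) <= W b.
Proof.
  intros Hb Hcmp.
  pose proof (increment_le (fun t => Phi (1 - f t)) W (fun t => phi (1 - f t) * (f t - T (f t)))
                (fun t => T (f t)) 0 b Hb) as Hinc.
  replace (W 0) with 0 in Hinc by (unfold W, served_work; rewrite RInt_point; reflexivity).
  replace (f 0) with lam in Hinc by (symmetry; apply extend_left_0).
  enough (Phi (1 - f b) - Phi (1 - lam) <= W b - 0) by lra.
  apply Hinc.
  - intros; apply potential_deriv; lra.
  - intros; apply work_deriv.
  - intros; apply potential_continuous; lra.
  - intros; apply work_continuous.
  - intros x Hx. apply Hcmp. apply (solution_in_unit d K lam F K_pos K_lt_d lam_unit F_sol). lra.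
Qed.

End Potential.
End Work.

(* Parameters of the lower potential (below): a = lam d/K - 1, alpha = -(d/K)/a and the
   slope s = (1 - alpha (1-lam))/a; the offset collects the terms of the resulting lower
   bound that stay bounded as lam -> 1. *)
Definition load_excess (d K : nat) (lam : R) : R := lam * INR d / INR K - 1.

Definition lower_alpha (d K : nat) (lam : R) : R := - (INR d / INR K) / load_excess d K lam.

Definition lower_slope (d K : nat) (lam : R) : R :=
  (1 - lower_alpha d K lam * (1 - lam)) / load_excess d K lam.

Definition lower_offset (d K : nat) (lam : R) : R :=
  lower_alpha d K lam * lam
  + lower_slope d K lam * (ln (load_excess d K lam / 2) - ln (1 + load_excess d K lam)).

Definition lower_potential (d K : nat) (lam v : R) : R :=
  lam * (lower_alpha d K lam * v
         + lower_slope d K lam * ln ((1 - lam) + load_excess d K lam * v)).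

Section LowerPotential.
Variables (d K : nat) (lam : R).
Hypothesis K_pos : (1 <= K)%nat.
Hypothesis K_lt_d : (K < d)%nat.
Hypothesis lam_unit : 0 < lam < 1.
Hypothesis heavy_load : INR K < lam * INR d.
Let a := load_excess d K lam.
Let alpha := lower_alpha d K lam.
Let slope := lower_slope d K lam.

Lemma lower_parameters : 0 < a /\ alpha < 0 /\ 0 < slope.
Proof.
  pose proof (INR_K_pos K K_pos) as HK.
  assert (Ha : 0 < a).
  { unfold a, load_excess. apply (Rmult_lt_reg_r (INR K)); [assumption|]. field_simplify; lra. }
  assert (Hdk : 0 < INR d / INR K)
    by (apply Rdiv_lt_0_compat; [pose proof (lt_INR K d K_lt_d); lra | assumption]).
  assert (Hal : alpha < 0).
  { unfold alpha, lower_alpha. fold a. unfold Rdiv at 1.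
    pose proof (Rinv_0_lt_compat a Ha). nra. }
  repeat split; try assumption.
  unfold slope, lower_slope. fold a alpha. apply Rdiv_lt_0_compat; nra.
Qed.

(* The lower potential is a primitive of the weight psi of T_lower_comparison. *)
Lemma lower_potential_deriv v : 0 < v < 1 ->
  is_derive (lower_potential d K lam) v
    (lam * (1 - INR d / INR K * v) / ((1 - lam) + (lam * INR d / INR K - 1) * v)).
Proof.
  intros Hv. pose proof (INR_K_pos K K_pos). destruct lower_parameters as [Ha [Hal Hs]].
  unfold lower_potential. fold a alpha slope.
  replace (lam * INR d / INR K - 1) with a by reflexivity.
  auto_derive; [nra|].
  unfold slope, alpha, lower_slope, lower_alpha. fold a. field. split; nra.
Qed.

Lemma lower_potential_increment v : / 2 <= v <= 1 ->
  lam * (slope * (- ln (1 - lam)) + lower_offset d K lam)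
    <= lower_potential d K lam v - lower_potential d K lam (1 - lam).
Proof.
  intros Hv. destruct lower_parameters as [Ha [Hal Hs]].
  unfold lower_potential, lower_offset. fold a alpha slope.
  assert (ln (a / 2) <= ln ((1 - lam) + a * v)) by (apply ln_le; [lra | nra]).
  assert (Hln : ln ((1 - lam) + a * (1 - lam)) = ln (1 - lam) + ln (1 + a))
    by (rewrite <- ln_mult by lra; f_equal; ring).
  rewrite Hln.
  assert (alpha <= alpha * v) by nra.
  assert (slope * ln (a / 2) <= slope * ln ((1 - lam) + a * v))
    by (apply Rmult_le_compat_l; lra).
  nra.
Qed.

End LowerPotential.

Section Bounds.
Variables (d K : nat) (lam : R) (F : R -> R).
Hypothesis K_pos : (1 <= K)%nat.
Hypothesis K_lt_d : (K < d)%nat.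
Hypothesis lam_unit : 0 < lam < 1.
Hypothesis F_sol : is_LL_solution d K lam F.
Let m := INR d - INR K.
Let f := extend_left lam F.
Let W := served_work d K lam F.

Lemma work_upper b : 0 <= b -> W b <= growth_const d K + INR K / m * (- ln (1 - lam)).
Proof.
  intros Hb. pose proof (slack_pos d K K_lt_d) as Hm. pose proof (INR_K_pos K K_pos) as HK.
  fold m in Hm. pose proof (growth_const_nonneg d K K_pos K_lt_d) as HC.
  set (Phi := fun v => INR K / m * ln v + growth_const d K * v).
  set (phi := fun v => INR K / (m * v) + growth_const d K).
  assert (HP : forall v, 0 < v < 1 -> is_derive Phi v (phi v)).
  { intros v Hv. unfold Phi, phi. auto_derive; [lra | field; lra]. }
  pose proof (work_le_potential d K lam F K_pos K_lt_d lam_unit F_sol Phi phi HP b Hb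
                (T_upper_comparison d K lam K_pos K_lt_d lam_unit)) as HW.
  fold W f in HW. unfold Phi in HW.
  pose proof (solution_range d K lam F K_pos K_lt_d lam_unit F_sol b Hb) as Hr. fold f in Hr.
  assert (ln (1 - f b) <= 0) by (rewrite <- ln_1; apply ln_le; lra).
  assert (INR K / m * ln (1 - f b) <= 0)
    by (assert (0 < INR K / m) by (apply Rdiv_lt_0_compat; lra); nra).
  assert (growth_const d K * (1 - f b) <= growth_const d K) by nra.
  assert (0 <= growth_const d K * (1 - lam)) by nra.
  lra.
Qed.

(* Lower bound at b = ln 2 / (1-lam), where F(b) <= 1/2 by the exponential decay. *)
Lemma work_lower : INR K < lam * INR d -> exists b, 0 <= b /\
  lam * (lower_slope d K lam * (- ln (1 - lam)) + lower_offset d K lam) <= W b.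
Proof.
  intros Hload. set (b := ln 2 / (1 - lam)).
  assert (Hb : 0 <= b).
  { unfold b. left. apply Rdiv_lt_0_compat; [|lra]. rewrite <- ln_1. apply ln_increasing; lra. }
  exists b. split; [assumption|].
  destruct (solution_bounds d K lam F K_pos K_lt_d lam_unit F_sol b Hb) as [_ Hfb]. fold f in Hfb.
  replace (- (1 - lam) * b) with (- ln 2) in Hfb by (unfold b; field; lra).
  rewrite exp_Ropp, exp_ln in Hfb by lra.
  pose proof (solution_range d K lam F K_pos K_lt_d lam_unit F_sol b Hb) as Hr. fold f in Hr.
  eapply Rle_trans;
    [apply (lower_potential_increment d K lam K_pos K_lt_d lam_unit Hload (1 - f b)); nra|].
  apply (potential_le_work d K lam F K_pos K_lt_d lam_unit F_sol _ _
           (lower_potential_deriv d K lam K_pos K_lt_d lam_unit Hload) b Hb).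
  intros u Hu. apply (T_lower_comparison d K lam K_pos K_lt_d lam_unit u Hu Hload).
Qed.

Lemma mean_wait_as_sup : exists L, mean_wait d K lam F = / lam * L /\
  (forall b, 0 <= b -> W b <= L) /\ L <= growth_const d K + INR K / m * (- ln (1 - lam)).
Proof.
  destruct (is_lim_nondecreasing_bounded W _
              (work_nondecreasing d K lam F K_pos K_lt_d lam_unit F_sol) work_upper) as [L [Hlim [Hsup Hbnd]]].
  exists L. split; [|split; assumption].
  unfold mean_wait. f_equal.
  replace (Lim (fun b => RInt (fun w => T_LL d K lam (F w)) 0 b) p_infty) with (Finite L);
    [reflexivity|].
  symmetry. apply is_lim_unique.
  apply (is_lim_ext_loc W); [|exact Hlim].
  exists 0. intros x Hx. unfold W, served_work. apply RInt_ext.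
  intros t Ht. rewrite Rmin_left, Rmax_right in Ht by lra.
  rewrite (extend_left_pos lam F) by lra. reflexivity.
Qed.

End Bounds.

Lemma wait_ratio_bounds (d K : nat) (lam : R) (F : R -> R) :
  (1 <= K)%nat -> (K < d)%nat -> 0 < lam < 1 -> INR K < lam * INR d ->
  is_LL_solution d K lam F ->
  let ell := - ln (1 - lam) in
  lower_slope d K lam + lower_offset d K lam * / ell
    <= - mean_wait d K lam F / ln (1 - lam)
    <= INR K / (INR d - INR K) * / lam + growth_const d K * / lam * / ell.
Proof.
  intros K_pos K_lt_d lam_unit Hload F_sol ell.
  pose proof (INR_K_pos K K_pos). pose proof (slack_pos d K K_lt_d).
  destruct (mean_wait_as_sup d K lam F K_pos K_lt_d lam_unit F_sol) as [L [Hmw [Hsup Hup]]].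
  destruct (work_lower d K lam F K_pos K_lt_d lam_unit F_sol Hload) as [b [Hb Hlo]].
  pose proof (Hsup b Hb) as HLb.
  assert (Hln : ln (1 - lam) < 0) by (rewrite <- ln_1; apply ln_increasing; lra).
  assert (Hell : 0 < ell) by (unfold ell; lra).
  fold ell in Hlo, Hup.
  replace (- mean_wait d K lam F / ln (1 - lam)) with (L / (lam * ell))
    by (rewrite Hmw; unfold ell; field; lra).
  assert (Hle : 0 < lam * ell) by nra.
  split; apply (Rmult_le_reg_r (lam * ell)); try assumption;
    replace (L / (lam * ell) * (lam * ell)) with L by (field; lra).
  - replace ((lower_slope d K lam + lower_offset d K lam * / ell) * (lam * ell))
      with (lam * (lower_slope d K lam * ell + lower_offset d K lam)) by (field; lra).
    lra.
  - replace ((INR K / (INR d - INR K) * / lam + growth_const d K * / lam * / ell) * (lam * ell))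
      with (growth_const d K + INR K / (INR d - INR K) * ell) by (field; lra).
    exact Hup.
Qed.

Lemma filterlim_at_left_continuous (g : R -> R) (x y : R) :
  continuous g x -> g x = y -> filterlim g (at_left x) (locally y).
Proof. intros Hg <-. exact (filterlim_filter_le_1 g (filter_le_within _) Hg). Qed.

Lemma inv_neg_ln_lim : filterlim (fun l => / (- ln (1 - l))) (at_left 1) (locally 0).
Proof.
  apply (proj2 (filterlim_locally _ _)). intros eps.
  pose proof (cond_pos eps) as He.
  exists (mkposreal (exp (- / eps)) (exp_pos _)). intros x Hx Hx1.
  apply Rabs_lt_between' in Hx. simpl in Hx.
  assert (Hl : ln (1 - x) < - / eps).
  { rewrite <- (ln_exp (- / eps)). apply ln_increasing; lra. }
  assert (0 < / eps) by (apply Rinv_0_lt_compat; lra).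
  apply Rabs_lt_between'. rewrite Rminus_0_l, Rplus_0_l. split.
  - assert (0 < / (- ln (1 - x))) by (apply Rinv_0_lt_compat; lra). lra.
  - replace (pos eps) with (/ / eps) by (field; lra). apply Rinv_lt_contravar; nra.
Qed.

Lemma filterlim_plus_mult_null {F : (R -> Prop) -> Prop} {FF : Filter F}
  (f g h : R -> R) (A B : R) :
  filterlim f F (locally A) -> filterlim g F (locally B) -> filterlim h F (locally 0) ->
  filterlim (fun x => f x + g x * h x) F (locally A).
Proof.
  intros Hf Hg Hh.
  assert (Hgh : filterlim (fun x => g x * h x) F (locally (B * 0))).
  { apply (filterlim_comp_2 g h Rmult Hg Hh). apply (filterlim_mult (K := R_AbsRing) B 0). }
  rewrite Rmult_0_r in Hgh.
  pose proof (filterlim_plus (K := R_AbsRing) (V := R_NormedModule) A 0) as HP.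
  change (plus A 0) with (A + 0) in HP. rewrite Rplus_0_r in HP.
  exact (filterlim_comp_2 f (fun x => g x * h x) Rplus Hf Hgh HP).
Qed.

Section Limits.
Variables d K : nat.
Hypothesis K_pos : (1 <= K)%nat.
Hypothesis K_lt_d : (K < d)%nat.

Lemma load_excess_at_1 : load_excess d K 1 = (INR d - INR K) / INR K.
Proof. unfold load_excess. pose proof (INR_K_pos K K_pos). field. lra. Qed.

Lemma lower_slope_lim :
  filterlim (lower_slope d K) (at_left 1) (locally (INR K / (INR d - INR K))).
Proof.
  pose proof (INR_K_pos K K_pos). pose proof (slack_pos d K K_lt_d).
  assert (Ha : 0 < load_excess d K 1) by (rewrite load_excess_at_1; apply Rdiv_lt_0_compat; lra).
  apply filterlim_at_left_continuous.
  - apply (ex_derive_continuous (K := R_AbsRing) (V := R_NormedModule)).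
    unfold lower_slope, lower_alpha. unfold load_excess in Ha |- *. auto_derive. lra.
  - unfold lower_slope, lower_alpha. rewrite load_excess_at_1. field. lra.
Qed.

Lemma lower_offset_lim :
  filterlim (lower_offset d K) (at_left 1) (locally (lower_offset d K 1)).
Proof.
  pose proof (INR_K_pos K K_pos). pose proof (slack_pos d K K_lt_d).
  assert (Ha : 0 < load_excess d K 1) by (rewrite load_excess_at_1; apply Rdiv_lt_0_compat; lra).
  apply filterlim_at_left_continuous; [|reflexivity].
  apply (ex_derive_continuous (K := R_AbsRing) (V := R_NormedModule)).
  unfold lower_offset, lower_slope, lower_alpha. unfold load_excess in Ha |- *.
  auto_derive. repeat split; lra.
Qed.

End Limits.

Lemma scaled_inv_lim (c : R) : filterlim (fun l => c * / l) (at_left 1) (locally c).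
Proof.
  apply filterlim_at_left_continuous; [|field].
  apply (ex_derive_continuous (K := R_AbsRing) (V := R_NormedModule)). auto_derive. lra.
Qed.

Lemma heavy_load_eventually (d K : nat) : (1 <= K)%nat -> (K < d)%nat ->
  at_left 1 (fun l => 0 < l < 1 /\ INR K < l * INR d).
Proof.
  intros K_pos K_lt_d. pose proof (INR_K_pos K K_pos). pose proof (lt_INR K d K_lt_d).
  assert (Hkd : INR K / INR d < 1) by (apply (Rmult_lt_reg_r (INR d)); [lra | field_simplify; lra]).
  assert (0 < INR K / INR d) by (apply Rdiv_lt_0_compat; lra).
  exists (mkposreal (1 - INR K / INR d) ltac:(lra)).
  intros l Hl Hl1. apply Rabs_lt_between' in Hl. simpl in Hl.
  split; [lra|].
  assert (INR K / INR d * INR d < l * INR d) by (apply Rmult_lt_compat_r; lra).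
  replace (INR K / INR d * INR d) with (INR K) in * by (field; lra). assumption.
Qed.

Theorem mainTheorem5 (d K : nat) (F : R -> R -> R) :
  (1 <= K)%nat -> (K < d)%nat ->
  (forall lam, 0 < lam < 1 -> is_LL_solution d K lam (F lam)) ->
  filterlim (fun lam => - mean_wait d K lam (F lam) / ln (1 - lam))
    (at_left 1) (locally (INR K / INR (d - K))).
Proof.
  intros K_pos K_lt_d F_sol. rewrite minus_INR by lia.
  apply (filterlim_le_le (F := at_left 1)
    (fun l => lower_slope d K l + lower_offset d K l * / (- ln (1 - l))) _
    (fun l => INR K / (INR d - INR K) * / l + (growth_const d K * / l) * / (- ln (1 - l)))
    (INR K / (INR d - INR K))).
  - generalize (heavy_load_eventually d K K_pos K_lt_d). apply filter_imp.
    intros l [Hl Hload]. exact (wait_ratio_bounds d K l (F l) K_pos K_lt_d Hl Hload (F_sol l Hl)).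
  - apply (filterlim_plus_mult_null _ _ _ _ (lower_offset d K 1));
      [apply lower_slope_lim | apply lower_offset_lim | apply inv_neg_ln_lim]; assumption.
  - apply (filterlim_plus_mult_null _ _ _ _ (growth_const d K));
      [apply scaled_inv_lim | apply scaled_inv_lim | apply inv_neg_ln_lim].
Qed.
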